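(* Fix $y>0$ and prices $0\le p_1'<p_1''\le y$, and consider an increase in the price of good 1 from $p_1'$ to $p_1''$. Suppose Assumptions 1 (with $U_0$ strictly increasing) and 2 hold. For a consumer $i$ with threshold $t_i$: 1. If $p_1'\ge t_i$ (no attention), then regardless of preferences $S^{EV}=0$. 2. If $U_1(y-p_1')\le U_0(y)$, then regardless of attention $S^{EV}=0$. 3. If $U_1(y-p_1'')\le U_0(y)<U_1(y-p_1')$, then for both full attention ($p_1'<p_1''<t_i$) and partial attention ($p_1'<t_i\le p_1''$) consumers, $S^{EV}=y-p_1'-U_1^{-1}(U_0(y))=p^{10}-p_1'\le p_1''-p_1'$. 4. If $U_0(y)<U_1(y-p_1'')<U_1(y-p_1')$, then (a) if $p_1'<p_1''<t_i$ (full attention), $S^{EV}=p_1''-p_1'$; (b) if $p_1'<t_i\le p_1''$ (partial attention), $S^{EV}=y-p_1'-U_1^{-1}(U_0(y))=p^{10}-p_1'>p_1''-p_1'$. Here $p^{10}$ denotes the price of good 1 satisfying $U_1(y-p^{10})=U_0(y)$.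
   Context: Two goods, $0$ (price $0$) and $1$ (price $p_1\ge0$). All consumers have common income $y>0$, choose one good and spend the remainder on a numeraire. All consumers share utility functions $U_0:(0,\infty)\to[0,\infty)$ and $U_1:[0,\infty)\to[0,\infty)$ of the numeraire amount. Each consumer $i$ has an attention-price threshold $t_i$, distributed in the population with CDF $G$; consumer $i$ considers good 1 at price $p_1$ iff $p_1<t_i$ (good 0 is always considered) and chooses her utility-maximizing considered good, ties broken toward good 0. Assumption 1: (i) $U_0$ strictly increasing, $U_1$ continuous and strictly increasing; (ii) for every $y>0$ there is $\bar p_1\in[0,y]$ with $U_0(y)\ge U_1(y-\bar p_1)$. Assumption 2: $G(0)=0$. Equivalent variation of consumer $i$ for the price increase from $p_1'$ to $p_1''$: if $p_1''<t_i$ (full attention), $S^{EV}$ is the solution $S$ of $\max\{U_0(y-S),U_1(y-S-p_1')\}=\max\{U_0(y),U_1(y-p_1'')\}$; if $p_1'<t_i\le p_1''$ (partial attention), it solves $\max\{U_0(y-S),U_1(y-S-p_1')\}=U_0(y)$; if $p_1'\ge t_i$ (no attention), it solves $U_0(y-S)=U_0(y)$. *)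

From Stdlib Require Import Reals.
Open Scope R_scope.

(* Utilities are total functions R -> R; only their values on the economic
   domains ((0,oo) for U0, [0,oo) for U1) are ever used. *)

(* [best_value U0 U1 y p S v] : with income y - S and price p of good 1,
   the maximal utility over the AVAILABLE options equals v, i.e.
   max{U0(y-S), U1(y-S-p)} = v, where good 0 is available iff y-S > 0
   (domain of U0) and good 1 iff y-S-p >= 0 (domain of U1). *)
Definition best_value (U0 U1 : R -> R) (y p S v : R) : Prop :=
  ((0 < y - S /\ U0 (y - S) = v) \/ (0 <= y - S - p /\ U1 (y - S - p) = v)) /\
  (0 < y - S -> U0 (y - S) <= v) /\
  (0 <= y - S - p -> U1 (y - S - p) <= v).

Definition EV_solves (U0 U1 : R -> R) (y p1' p1'' t S : R) : Prop :=
  (p1'' < t -> best_value U0 U1 y p1' S (Rmax (U0 y) (U1 (y - p1'')))) /\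
  (p1' < t <= p1'' -> best_value U0 U1 y p1' S (U0 y)) /\
  (t <= p1' -> 0 < y - S /\ U0 (y - S) = U0 y).

Definition EV_is (U0 U1 : R -> R) (y p1' p1'' t s : R) : Prop :=
  EV_solves U0 U1 y p1' p1'' t s /\
  forall S, EV_solves U0 U1 y p1' p1'' t S -> S = s.

Definition is_U1inv (U1 : R -> R) (v u : R) : Prop := 0 <= u /\ U1 u = v.

Definition is_p10 (U0 U1 : R -> R) (y p10 : R) : Prop :=
  is_U1inv U1 (U0 y) (y - p10).

(* Strict monotonicity of U0 and U1 makes every regime of the EV equation
   have exactly one solution, read off from where the target utility is
   attained.  When the target U0(y) is below U1(y - p1'), Assumption 1(ii)
   gives a price at which good 1 is worse than good 0, and the intermediate
   value theorem for U1 yields u = U1^{-1}(U0(y)); comparing u with y - p1''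
   by monotonicity gives the bounds against p1'' - p1'. *)

From Stdlib Require Import Reals Ranalysis5 Lra.
Open Scope R_scope.

Section StrictlyIncreasingOn.

Variables (D : R -> Prop) (f : R -> R).
Hypothesis f_incr : forall a b, D a -> a < b -> f a < f b.

Lemma incr_on_lt_reflect a b : D b -> f a < f b -> a < b.
Proof.
  intros Db Hlt.
  destruct (Rtotal_order a b) as [Hab | [-> | Hba]]; [exact Hab | lra |].
  specialize (f_incr b a Db Hba); lra.
Qed.

Lemma incr_on_le_reflect a b : D b -> f a <= f b -> a <= b.
Proof.
  intros Db Hle.
  destruct (Rle_lt_dec a b) as [Hab | Hba]; [exact Hab |].
  specialize (f_incr b a Db Hba); lra.
Qed.

Lemma incr_on_inj a b : D a -> D b -> f a = f b -> a = b.
Proof.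
  intros Da Db Heq.
  apply Rle_antisym; apply incr_on_le_reflect; auto; lra.
Qed.

End StrictlyIncreasingOn.

Lemma continuity_pt_Rmax0 (f : R -> R) a :
  (forall x, 0 <= x -> continue_in f (fun z => 0 <= z) x) ->
  0 <= a -> continuity_pt (fun z => f (Rmax 0 z)) a.
Proof.
  intros f_cont Ha eps Heps.
  destruct (f_cont a Ha eps Heps) as [alp [Halp Hclose]].
  exists alp; split; [exact Halp |].
  intros x [_ Hxa]; simpl in *; unfold R_dist in *.
  rewrite (Rmax_right 0 a Ha).
  destruct (Req_dec (Rmax 0 x) a) as [-> | Hne].
  - unfold Rminus; rewrite Rplus_opp_r, Rabs_R0; lra.
  - apply Hclose; split; [split; [apply Rmax_l | congruence] |].
    apply Rle_lt_trans with (Rabs (x - a)); [| exact Hxa].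
    unfold Rmax; destruct (Rle_dec 0 x); [lra |].
    rewrite !Rabs_left1; lra.
Qed.

(* f is only continuous within [0,oo), so the unrestricted IVT is applied to
   the clamped function z |-> f (Rmax 0 z). *)
Lemma continue_in_ivt (f : R -> R) a b v :
  (forall x, 0 <= x -> continue_in f (fun z => 0 <= z) x) ->
  0 <= a -> a < b -> f a <= v <= f b -> exists u, a <= u <= b /\ f u = v.
Proof.
  intros f_cont Ha Hab Hv.
  destruct (f_interv_is_interv (fun z => f (Rmax 0 z)) a b v Hab)
    as [u [Hu Hfu]].
  - rewrite !Rmax_right by lra; exact Hv.
  - intros x Hx; apply continuity_pt_Rmax0; [exact f_cont | lra].
  - exists u; split; [exact Hu |].
    rewrite Rmax_right in Hfu by lra; exact Hfu.
Qed.

Section BestValue.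

Variables U0 U1 : R -> R.
Hypothesis U0_incr : forall a b, 0 < a -> a < b -> U0 a < U0 b.
Hypothesis U1_incr : forall a b, 0 <= a -> a < b -> U1 a < U1 b.

Definition best_value_is (y p v s : R) : Prop :=
  best_value U0 U1 y p s v /\ forall S, best_value U0 U1 y p S v -> S = s.

Lemma best_value_is_U0_zero y p :
  0 < y -> U1 (y - p) <= U0 y -> best_value_is y p (U0 y) 0.
Proof.
  intros Hy HU; unfold best_value_is, best_value; rewrite !Rminus_0_r; split.
  - split; [left; split; [exact Hy | reflexivity] |].
    split; intros; [lra | exact HU].
  - intros S [[[HS HUS] | [HS HUS]] [HU0S _]].
    + apply (incr_on_inj _ _ U0_incr) in HUS; [lra | exact HS | exact Hy].
    + assert (S_nonpos : S <= 0).
      { destruct (Rle_lt_dec S 0) as [HS0 | HS0]; [exact HS0 |].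
        specialize (U1_incr (y - S - p) (y - p) HS ltac:(lra)); lra. }
      specialize (HU0S ltac:(lra)).
      apply (incr_on_le_reflect _ _ U0_incr) in HU0S; [lra | exact Hy].
Qed.

Lemma best_value_is_U0_inv y p u :
  0 < y -> p <= y -> U0 y < U1 (y - p) -> is_U1inv U1 (U0 y) u ->
  best_value_is y p (U0 y) (y - p - u).
Proof.
  intros Hy Hpy HU [Hu HUu].
  assert (u_lt : u < y - p).
  { apply (incr_on_lt_reflect _ _ U1_incr); [lra | congruence]. }
  unfold best_value_is, best_value.
  replace (y - (y - p - u) - p) with u by ring. split.
  - split; [right; split; [exact Hu | exact HUu] |].
    split; [| intros; lra].
    intros Hpos; apply Rlt_le, U0_incr; lra.
  - intros S [[[HS HUS] | [HS HUS]] [_ HU1S]].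
    + apply (incr_on_inj _ _ U0_incr) in HUS; [| exact HS | exact Hy].
      replace (y - S - p) with (y - p) in HU1S by lra.
      specialize (HU1S ltac:(lra)); lra.
    + rewrite <- HUu in HUS.
      apply (incr_on_inj _ _ U1_incr) in HUS; [lra | exact HS | exact Hu].
Qed.

Lemma best_value_is_U1 y p q :
  p <= q <= y -> U0 y < U1 (y - q) ->
  best_value_is y p (U1 (y - q)) (q - p).
Proof.
  intros Hpq HU; unfold best_value_is, best_value.
  replace (y - (q - p) - p) with (y - q) by ring. split.
  - split; [right; split; [lra | reflexivity] |].
    split; [| intros; lra].
    intros Hpos; destruct (Req_dec q p) as [-> | Hne].
    + replace (y - (p - p)) with y by ring; lra.
    + specialize (U0_incr (y - (q - p)) y Hpos ltac:(lra)); lra.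
  - intros S [[[HS HUS] | [HS HUS]] [_ HU1S]].
    + assert (S_neg : S < 0).
      { enough (y < y - S) by lra.
        apply (incr_on_lt_reflect _ _ U0_incr); [exact HS | lra]. }
      specialize (HU1S ltac:(lra)).
      specialize (U1_incr (y - q) (y - S - p) ltac:(lra) ltac:(lra)); lra.
    + apply (incr_on_inj _ _ U1_incr) in HUS; lra.
Qed.

Lemma U1inv_exists y p :
  (forall x, 0 <= x -> continue_in U1 (fun z => 0 <= z) x) ->
  (exists pbar, 0 <= pbar <= y /\ U1 (y - pbar) <= U0 y) ->
  p <= y -> U0 y < U1 (y - p) -> exists u, is_U1inv U1 (U0 y) u.
Proof.
  intros U1_cont [pbar [Hpbar HUpbar]] Hpy HU.
  assert (pbar_gt : y - pbar < y - p).
  { apply (incr_on_lt_reflect _ _ U1_incr); lra. }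
  destruct (continue_in_ivt U1 (y - pbar) (y - p) (U0 y) U1_cont)
    as [u [Hu HUu]]; [lra | exact pbar_gt | lra |].
  exists u; split; [lra | exact HUu].
Qed.

End BestValue.

Lemma is_p10_of_U1inv U0 U1 y u :
  is_U1inv U1 (U0 y) u -> is_p10 U0 U1 y (y - u).
Proof.
  unfold is_p10; replace (y - (y - u)) with u by ring; auto.
Qed.

Section Attention.

Variables (U0 U1 : R -> R) (y p1' p1'' t : R).
Hypothesis price_incr : p1' < p1''.

Lemma EV_is_no_attention :
  (forall a b, 0 < a -> a < b -> U0 a < U0 b) ->
  0 < y -> t <= p1' -> EV_is U0 U1 y p1' p1'' t 0.
Proof.
  intros U0_incr Hy Ht. split.
  - split; [intros; lra |]. split; [intros; lra |].
    intros _; rewrite Rminus_0_r; auto.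
  - intros S [_ [_ Hnone]]; destruct (Hnone Ht) as [HS HUS].
    apply (incr_on_inj _ _ U0_incr) in HUS; [lra | exact HS | exact Hy].
Qed.

Lemma EV_is_partial_attention s :
  p1' < t <= p1'' -> best_value_is U0 U1 y p1' (U0 y) s ->
  EV_is U0 U1 y p1' p1'' t s.
Proof.
  intros Ht [Hs Huniq]. split.
  - split; [intros; lra |]. split; [intros; exact Hs | intros; lra].
  - intros S [_ [Hpart _]]; apply Huniq, Hpart, Ht.
Qed.

Lemma EV_is_full_attention s :
  p1'' < t -> best_value_is U0 U1 y p1' (Rmax (U0 y) (U1 (y - p1''))) s ->
  EV_is U0 U1 y p1' p1'' t s.
Proof.
  intros Ht [Hs Huniq]. split.
  - split; [intros; exact Hs |]. split; intros; lra.
  - intros S [Hfull _]; apply Huniq, Hfull, Ht.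
Qed.

Lemma EV_is_attention_U0 s :
  p1' < t -> U1 (y - p1'') <= U0 y -> best_value_is U0 U1 y p1' (U0 y) s ->
  EV_is U0 U1 y p1' p1'' t s.
Proof.
  intros Ht HU Hs.
  destruct (Rlt_le_dec p1'' t) as [Hfull | Hpart].
  - apply EV_is_full_attention; [exact Hfull |].
    rewrite Rmax_left by exact HU; exact Hs.
  - apply EV_is_partial_attention; [lra | exact Hs].
Qed.

End Attention.

Theorem lemma1 (U0 U1 : R -> R) (y p1' p1'' t : R)
  (* prices and income *)
  (Hy : 0 < y) (Hp' : 0 <= p1') (Hpp : p1' < p1'') (Hp'' : p1'' <= y)
  (* codomains [0,oo) on the respective domains *)
  (HU0nn : forall x, 0 < x -> 0 <= U0 x)
  (HU1nn : forall x, 0 <= x -> 0 <= U1 x)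
  (* Assumption 1(i) *)
  (HU0inc : forall a b, 0 < a -> a < b -> U0 a < U0 b)
  (HU1inc : forall a b, 0 <= a -> a < b -> U1 a < U1 b)
  (HU1cont : forall x, 0 <= x -> continue_in U1 (fun z => 0 <= z) x)
  (* Assumption 1(ii) *)
  (HA1ii : forall y', 0 < y' -> exists pbar, 0 <= pbar <= y' /\ U1 (y' - pbar) <= U0 y')
  (* Assumption 2 (G(0) = 0), for consumer i: threshold t_i > 0 *)
  (Ht : 0 < t) :
  (* 1. no attention *)
  (t <= p1' -> EV_is U0 U1 y p1' p1'' t 0) /\
  (* 2. *)
  (U1 (y - p1') <= U0 y -> EV_is U0 U1 y p1' p1'' t 0) /\
  (* 3. full or partial attention *)
  (U1 (y - p1'') <= U0 y < U1 (y - p1') ->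
     p1'' < t \/ (p1' < t /\ t <= p1'') ->
     exists u p10, is_U1inv U1 (U0 y) u /\ is_p10 U0 U1 y p10 /\
       EV_is U0 U1 y p1' p1'' t (y - p1' - u) /\
       y - p1' - u = p10 - p1' /\ p10 - p1' <= p1'' - p1') /\
  (* 4. *)
  (U0 y < U1 (y - p1'') < U1 (y - p1') ->
     (* (a) full attention *)
     (p1'' < t -> EV_is U0 U1 y p1' p1'' t (p1'' - p1')) /\
     (* (b) partial attention *)
     (p1' < t <= p1'' ->
       exists u p10, is_U1inv U1 (U0 y) u /\ is_p10 U0 U1 y p10 /\
         EV_is U0 U1 y p1' p1'' t (y - p1' - u) /\
         y - p1' - u = p10 - p1' /\ p10 - p1' > p1'' - p1')).
Proof.
  assert (U1_price : U1 (y - p1'') < U1 (y - p1')) by (apply HU1inc; lra).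
  split; [apply EV_is_no_attention; auto |].
  split.
  { intros HU; destruct (Rle_lt_dec t p1') as [Hnone | Hatt].
    - apply EV_is_no_attention; auto.
    - apply EV_is_attention_U0; [exact Hpp | exact Hatt | lra |].
      apply best_value_is_U0_zero; auto. }
  split.
  { intros [HU'' HU'] Hatt.
    destruct (U1inv_exists U0 U1 HU1inc y p1' HU1cont (HA1ii y Hy)) as [u Hu];
      [lra | exact HU' |].
    exists u, (y - u); split; [exact Hu |]; split; [apply is_p10_of_U1inv, Hu |].
    split; [| split; [ring |]].
    - apply EV_is_attention_U0; [exact Hpp | lra | exact HU'' |].
      apply best_value_is_U0_inv; auto; lra.
    - destruct Hu as [Hu HUu]; rewrite <- HUu in HU''.
      apply (incr_on_le_reflect _ _ HU1inc) in HU''; [lra | exact Hu]. }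
  intros [HU'' _]; split.
  - intros Hfull; apply EV_is_full_attention; [exact Hpp | exact Hfull |].
    rewrite Rmax_right by lra; apply best_value_is_U1; auto; lra.
  - intros Hpart.
    destruct (U1inv_exists U0 U1 HU1inc y p1'' HU1cont (HA1ii y Hy)) as [u Hu];
      [exact Hp'' | exact HU'' |].
    exists u, (y - u); split; [exact Hu |]; split; [apply is_p10_of_U1inv, Hu |].
    split; [| split; [ring |]].
    + apply EV_is_partial_attention; [exact Hpart |].
      apply best_value_is_U0_inv; auto; lra.
    + destruct Hu as [Hu HUu]; rewrite <- HUu in HU''.
      apply (incr_on_lt_reflect _ _ HU1inc) in HU''; lra.
Qed.
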